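(* Let $E$ be a linear space of $\mathbf{b}\times\mathbf{c}$ complex matrices and $r\le \min\{\mathbf{b},\mathbf{c}\}$. Suppose that, in suitable bases, every $X\in E$ has the block form $$X=\begin{pmatrix} \mathbf{x}&W\\ U&0\end{pmatrix}$$ with $\mathbf{x}$ of size $r\times r$, $W$ of size $r\times(\mathbf{c}-r)$, $U$ of size $(\mathbf{b}-r)\times r$ and zero lower-right block, and that $U\mathbf{x}^kW=0$ for all $k\ge 0$. Then every element of $E$ has rank at most $r$. *)

From HB Require Import structures.
From mathcomp Require Import all_boot all_order all_algebra.
From mathcomp Require Import complex.
From mathcomp Require Import reals.
Set Implicit Arguments. Unset Strict Implicit. Unset Printing Implicit Defensive.
Import Order.TTheory GRing.Theory Num.Theory.

From HB Require Import structures.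
From mathcomp Require Import all_boot all_order all_algebra.
From mathcomp Require Import complex.
From mathcomp Require Import reals.
From mathcomp Require Import zify.
Import Order.TTheory GRing.Theory Num.Theory.
Local Open Scope ring_scope.

(* The row spaces of U, U x, U x^2, ... span an x-stable space L (the Krylov
   space of x generated by U) which W annihilates, since L W is spanned by the
   U x^k W = 0.  Splitting the row space of (x W) along L and a complement C,
   every row of X = (x W; U 0) lies in (L 0) + C (x W), a space of dimension
   at most dim L + dim C = r. *)

Lemma exists_nonincreasing_step (f : nat -> nat) N :
  (forall j, f j <= N)%N -> exists j, (f j.+1 <= f j)%N.
Proof.
move=> f_le.
have grow k : (exists j, (f j.+1 <= f j)%N) \/ (k <= f k)%N.
  elim: k => [|k [step | IHk]]; [by right | by left |].
  have [le_f | lt_f] := leqP (f k.+1) (f k); first by left; exists k.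
  by right; apply: leq_ltn_trans IHk lt_f.
have [//|] := grow N.+1; have := f_le N.+1; lia.
Qed.

Section BlockRank.

Variables (F : fieldType) (r m n : nat).
Variables (x : 'M[F]_r) (W : 'M[F]_(r, n)) (U : 'M[F]_(m, r)).

Lemma mxrank_block_mx0_stable p (L : 'M[F]_(p, r)) :
  (U <= L)%MS -> L *m W = 0 -> stablemx L x ->
  (\rank (block_mx x W U 0) <= r)%N.
Proof.
move=> sUL LW0 Lx_stable.
set C := (L^C)%MS; set T := row_mx x W.
set S := (L *m row_mx 1%:M 0 + C *m T)%MS.
have LrowS q (D : 'M_(q, p)) :
    (row_mx (D *m L) (0 : 'M_(q, n)) <= L *m row_mx 1%:M 0)%MS.
  rewrite mul_mx_row mulmx1 mulmx0.
  by rewrite -[X in row_mx _ X](mulmx0 _ D) -mul_mx_row submxMl.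
have T_sub : (T <= S)%MS.
  have LC_full : (1%:M <= L + C)%MS by rewrite sub1mx addsmx_compl_full.
  rewrite -[T]mul1mx; apply: submx_trans (submxMr T LC_full) _.
  rewrite addsmxMr addsmxS // mul_mx_row LW0.
  by case/submxP: Lx_stable => D ->; apply: LrowS.
have U0_sub : (row_mx U 0 <= S)%MS.
  by case/submxP: sUL => D ->; apply: submx_trans (LrowS _ D) (addsmxSl _ _).
have X_sub : (block_mx x W U 0 <= S)%MS by rewrite block_mxEv col_mx_sub T_sub.
apply: leq_trans (mxrankS X_sub) _.
apply: leq_trans (mxrank_adds_leqif _ _).1 _.
have := mxrankM_maxl L (row_mx 1%:M (0 : 'M_(r, n))).
have := mxrankM_maxl C T; have := rank_leq_col L.
rewrite /C mxrank_compl; lia.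
Qed.

Definition krylovmx j := (\sum_(k < j) <<U *m x ^+ k>>)%MS.

Lemma krylovmxS j : (krylovmx j <= krylovmx j.+1)%MS.
Proof. by rewrite /krylovmx big_ord_recr addsmxSl. Qed.

Lemma sub_krylovmx j : (U <= krylovmx j.+1)%MS.
Proof. by apply: (sumsmx_sup ord0) => //; rewrite genmxE expr0 mulmx1. Qed.

Lemma krylovmxMx j : (krylovmx j *m x <= krylovmx j.+1)%MS.
Proof.
rewrite /krylovmx sumsmxMr; apply/sumsmx_subP => k _.
apply: (sumsmx_sup (lift ord0 k)) => //=.
by rewrite (eqmxMr _ (genmxE _)) -mulmxA mulmxE -exprSr genmxE.
Qed.

Lemma exists_stable_krylovmx : exists j, stablemx (krylovmx j.+1) x.
Proof.
have [j rank_step] := exists_nonincreasing_step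
  (fun j => \rank (krylovmx j.+1)) r (fun j => rank_leq_col _).
have K_eq : (krylovmx j.+2 <= krylovmx j.+1)%MS.
  by rewrite -(mxrank_leqif_sup (krylovmxS j.+1)).2 eqn_leq rank_step mxrankS ?krylovmxS.
by exists j; apply: submx_trans (krylovmxMx j.+1) K_eq.
Qed.

Hypothesis UxW0 : forall k, U *m x ^+ k *m W = 0.

Lemma krylovmx_mulW j : krylovmx j *m W = 0.
Proof.
apply/sub_kermxP/sumsmx_subP => k _.
by rewrite genmxE; apply/sub_kermxP/UxW0.
Qed.

Lemma mxrank_block_mx0 : (\rank (block_mx x W U 0) <= r)%N.
Proof.
have [j Kx_stable] := exists_stable_krylovmx.
exact: mxrank_block_mx0_stable (sub_krylovmx j) (krylovmx_mulW _) Kx_stable.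
Qed.

End BlockRank.

Theorem mainTheorem5 (R : realType) (r m n : nat)
  (E : {vspace 'M[R[i]]_(r + m, r + n)})
  (P : 'M[R[i]]_(r + m)) (Q : 'M[R[i]]_(r + n))
  (hP : P \in unitmx) (hQ : Q \in unitmx)
  (hblock : forall X, X \in E -> drsubmx (P *m X *m Q) = 0)
  (hUxW : forall X, X \in E -> forall k : nat,
      dlsubmx (P *m X *m Q) *m (ulsubmx (P *m X *m Q)) ^+ k
        *m ursubmx (P *m X *m Q) = 0) :
  forall X, X \in E -> (\rank X <= r)%N.
Proof.
move=> X XE.
have -> : \rank X = \rank (P *m X *m Q).
  by rewrite mxrankMfree ?row_free_unit // eqmxMfull ?row_full_unit.
rewrite -[P *m X *m Q]submxK hblock //.
exact: mxrank_block_mx0 (hUxW X XE).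
Qed.
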